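(* Let $G$ be a connected graph of order $n$, and let $g$ be a non-negative integer with $0\leq g\leq \min\left\{\Delta(G),\left\lfloor \frac{n-3}{2}\right\rfloor\right\}$, such that $G$ has a $g$-good-neighbor cut. Then $$\kappa(G)\leq \kappa^g(G)\leq n-2g-2.$$ Moreover, the upper and lower bounds are sharp (each is attained with equality by some such graph and $g$).
   Context: For a connected graph $G=(V,E)$ and integer $g\ge0$: a set $F\subseteq V$ is a $g$-good-neighbor faulty set if $|N(v)\cap (V-F)|\geq g$ for every $v\in V-F$; a $g$-good-neighbor cut is such an $F$ with $G-F$ disconnected; $\kappa^g(G)$ is the minimum cardinality of a $g$-good-neighbor cut. $\kappa(G)$ is the usual vertex connectivity, $\Delta(G)$ the maximum degree. *)

From mathcomp Require Import all_boot.
Set Implicit Arguments. Unset Strict Implicit. Unset Printing Implicit Defensive.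

Section Graphs.
Variable T : finType.
Variable e : rel T.

Definition simple_graph : Prop := symmetric e /\ irreflexive e.

Definition connected_graph : Prop := forall x y : T, connect e x y.

Definition nbhd (v : T) : {set T} := [set u | e v u].

Definition maxdeg : nat := \max_(v : T) #|nbhd v|.

Definition del_rel (F : {set T}) : rel T :=
  fun x y => [&& x \notin F, y \notin F & e x y].

Definition disconnected_after (F : {set T}) : bool :=
  [exists x, exists y, [&& x \notin F, y \notin F & ~~ connect (del_rel F) x y]].

Definition good_neighbor_faulty (g : nat) (F : {set T}) : bool :=
  [forall v, (v \notin F) ==> (g <= #|nbhd v :&: ~: F|)].

Definition good_neighbor_cut (g : nat) (F : {set T}) : bool :=
  good_neighbor_faulty g F && disconnected_after F.

(* kappa^g(G): minimum size of a g-good-neighbor cut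
   (default #|T| if there is none; only used when one exists) *)
Definition kappa_g (g : nat) : nat :=
  \big[minn/#|T|]_(F : {set T} | good_neighbor_cut g F) #|F|.

(* kappa(G): usual vertex connectivity; minimum size of a vertex cut,
   and n - 1 if there is none (complete graph convention) *)
Definition kappa : nat :=
  \big[minn/#|T|.-1]_(F : {set T} | disconnected_after F) #|F|.

Definition prop21_hyp (g : nat) : Prop :=
  [/\ simple_graph, connected_graph,
      g <= minn maxdeg ((#|T| - 3)./2)
    & exists F : {set T}, good_neighbor_cut g F].

End Graphs.

From mathcomp Require Import all_boot all_order.
From mathcomp Require Import zify.
Import Order.TTheory.

(* If F is a g-good-neighbor cut separating x and y, the components C_x and
   C_y of x and y in G - F each contain a vertex together with its at least g
   surviving neighbours, so they have at least g + 1 vertices each. A surviving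
   neighbour of a vertex of C_x lies in C_x, hence the complement of
   C_x :|: C_y is again a g-good-neighbor cut, of size at most n - 2g - 2.
   Every g-good-neighbor cut is a vertex cut, which gives kappa <= kappa^g, and
   the path on three vertices with g = 0 attains both bounds. *)

Set Implicit Arguments.
Unset Strict Implicit.
Unset Printing Implicit Defensive.

Section BigMinNat.
Variables (I : finType) (P : pred I) (f : I -> nat) (d : nat).

Lemma bigminn_le_cond i : P i -> \big[minn/d]_(j | P j) f j <= f i.
Proof. exact: (@bigmin_le_cond _ nat). Qed.

Lemma bigminn_le_id : \big[minn/d]_(j | P j) f j <= d.
Proof. exact: (@bigmin_le_id _ nat). Qed.

Lemma leq_bigminn k : k <= d -> (forall i, P i -> k <= f i) ->
  k <= \big[minn/d]_(j | P j) f j.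
Proof. exact: (@le_bigmin _ nat). Qed.

End BigMinNat.

Section Deletion.
Variables (T : finType) (e : rel T).

Lemma connect_del_rel_sub (F F' : {set T}) x y : F \subset F' ->
  connect (del_rel e F') x y -> connect (del_rel e F) x y.
Proof.
move=> sFF'; apply: connect_sub => a b /and3P[aF' bF' eab]; apply: connect1.
by rewrite /del_rel eab !(contra (subsetP sFF' _)).
Qed.

Lemma good_neighbor_faultyP g (F : {set T}) :
  reflect (forall v, v \notin F -> g <= #|nbhd e v :&: ~: F|)
          (good_neighbor_faulty e g F).
Proof. by apply: (iffP forallP) => good v; apply/implyP; apply: good. Qed.

Lemma good_neighbor_faulty_compl g (F S : {set T}) :
  good_neighbor_faulty e g F -> S \subset ~: F ->
  (forall v, v \in S -> nbhd e v :&: ~: F \subset S) ->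
  good_neighbor_faulty e g (~: S).
Proof.
move=> /good_neighbor_faultyP good sSF closedS; apply/good_neighbor_faultyP => v.
rewrite in_setC negbK setCK => vS; apply: leq_trans (good v _) _.
  by have := subsetP sSF v vS; rewrite inE.
by rewrite subset_leq_card // subsetI subsetIl closedS.
Qed.

Lemma disconnected_after_neq0 (F : {set T}) :
  connected_graph e -> disconnected_after e F -> F != set0.
Proof.
move=> conn /existsP[x /existsP[y /and3P[_ _ nxy]]]; apply: contraNneq nxy => ->.
by rewrite (@eq_connect _ _ e) // => a b; rewrite /del_rel !inE.
Qed.

Lemma kappa_gt0 : connected_graph e -> 1 < #|T| -> 0 < kappa e.
Proof.
move=> conn nT; apply: leq_bigminn => [|F /(disconnected_after_neq0 conn)].
  by rewrite -ltnS prednK // ltnW.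
by rewrite card_gt0.
Qed.

Lemma kappa_le_kappa_g g : kappa e <= kappa_g e g.
Proof.
apply: leq_bigminn => [|F /andP[_]].
  exact: leq_trans (bigminn_le_id _ _ _) (leq_pred _).
exact: bigminn_le_cond.
Qed.

End Deletion.

Section Components.
Variables (T : finType) (e : rel T) (F : {set T}).
Hypotheses (sym_e : symmetric e) (irr_e : irreflexive e).

Let D := del_rel e F.

Lemma del_rel_sym : symmetric D.
Proof. by move=> a b; rewrite /D /del_rel sym_e andbCA. Qed.

Definition component (z : T) : {set T} := [set w | (w \notin F) && connect D z w].

Lemma component_id z : z \notin F -> z \in component z.
Proof. by move=> zF; rewrite inE zF connect0. Qed.

Lemma component_sub z : component z \subset ~: F.
Proof. by apply/subsetP => w; rewrite !inE => /andP[]. Qed.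

Lemma nbhd_component z v : v \in component z ->
  nbhd e v :&: ~: F \subset component z :\ v.
Proof.
rewrite inE => /andP[vF zv]; apply/subsetP => u; rewrite !inE => /andP[evu uF].
rewrite uF; apply/andP; split; first by apply: contraTneq evu => ->; rewrite irr_e.
by apply: connect_trans zv (connect1 _); rewrite /D /del_rel vF uF.
Qed.

Lemma card_component g z : good_neighbor_faulty e g F -> z \notin F ->
  g < #|component z|.
Proof.
move=> /good_neighbor_faultyP good zF; rewrite (cardsD1 z) component_id // add1n ltnS.
apply: leq_trans (good z zF) _; apply: subset_leq_card.
exact: nbhd_component (component_id zF).
Qed.

Lemma component_disjoint x y : ~~ connect D x y ->
  [disjoint component x & component y].
Proof.
move=> nxy; rewrite -setI_eq0; apply: contraNT nxy => /set0Pn[w].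
rewrite !inE => /andP[/andP[_ xw] /andP[_ yw]].
by apply: connect_trans xw _; rewrite (sym_connect_sym del_rel_sym).
Qed.

Lemma good_cut_two_components g x y :
  good_neighbor_faulty e g F -> x \notin F -> y \notin F -> ~~ connect D x y ->
  good_neighbor_cut e g (~: (component x :|: component y)).
Proof.
move=> good xF yF nxy; apply/andP; split.
  apply: good_neighbor_faulty_compl good _ _; first by rewrite subUset !component_sub.
  move=> v /setUP[] vC; apply: subset_trans (nbhd_component vC) _;
    by apply: subset_trans (subD1set _ v) _; rewrite (subsetUl, subsetUr).
apply/existsP; exists x; apply/existsP; exists y.
rewrite !in_setC !in_setU !component_id ?orbT //=; apply: contra nxy.
by apply: connect_del_rel_sub; rewrite subsetC subUset !component_sub.
Qed.

Lemma card_compl_two_components g x y :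
  good_neighbor_faulty e g F -> x \notin F -> y \notin F -> ~~ connect D x y ->
  #|~: (component x :|: component y)| <= #|T| - 2 * g - 2.
Proof.
move=> good xF yF nxy; have := cardsC (component x :|: component y).
rewrite cardsU (disjoint_setI0 (component_disjoint nxy)) cards0.
have := card_component good xF; have := card_component good yF.
lia.
Qed.

End Components.

Lemma exists_good_cut_le (T : finType) (e : rel T) g (F : {set T}) :
  simple_graph e -> good_neighbor_cut e g F ->
  exists2 F', good_neighbor_cut e g F' & #|F'| <= #|T| - 2 * g - 2.
Proof.
move=> [sym_e irr_e] /andP[good /existsP[x /existsP[y /and3P[xF yF nxy]]]].
exists (~: (component e F x :|: component e F y)).
  exact: good_cut_two_components.
exact: card_compl_two_components.
Qed.

Lemma kappa_bounds (T : finType) (e : rel T) g : prop21_hyp e g ->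
  kappa e <= kappa_g e g <= #|T| - 2 * g - 2.
Proof.
move=> [simple_e _ _ [F cutF]]; rewrite kappa_le_kappa_g /=.
have [F' cutF' le_F'] := exists_good_cut_le simple_e cutF.
exact: leq_trans (bigminn_le_cond _ _ cutF') le_F'.
Qed.

Section PathGraph.
Variable n : nat.

Definition path_graph : rel 'I_n := fun i j => (i.+1 == j :> nat) || (j.+1 == i :> nat).

Lemma path_graph_simple : simple_graph path_graph.
Proof.
split=> [i j | i]; first by rewrite /path_graph orbC.
by rewrite /path_graph orbb gtn_eqF.
Qed.

Lemma path_graph_connect_le (i j : 'I_n) : i <= j -> connect path_graph i j.
Proof.
move=> /subnKC; move: (j - i) => k; elim: k j => [|k IHk] j def_j.
  by rewrite (_ : j = i) //; apply: val_inj; rewrite /= -def_j addn0.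
have lt_ik : i + k < n by rewrite -ltnS -addnS def_j ltnS ltnW.
apply: connect_trans (IHk (Ordinal lt_ik) erefl) (connect1 _).
by rewrite /path_graph /= -def_j addnS eqxx.
Qed.

Lemma path_graph_connected : connected_graph path_graph.
Proof.
move=> i j; have [le_ij | /ltnW le_ji] := leqP i j; first exact: path_graph_connect_le.
by rewrite (sym_connect_sym path_graph_simple.1) path_graph_connect_le.
Qed.

Lemma path_graph_cut_vertex (k i j : 'I_n) : i < k < j ->
  disconnected_after path_graph [set k].
Proof.
move=> /andP[lt_ik lt_kj]; apply/existsP; exists i; apply/existsP; exists j.
rewrite !inE -!val_eqE (ltn_eqF lt_ik) (gtn_eqF lt_kj) /=.
have closed_lt : closed (del_rel path_graph [set k]) [pred l : 'I_n | l < k].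
  by move=> a b /and3P[]; rewrite !inE -!val_eqE /path_graph /=; lia.
apply: contraTN lt_kj => /(closed_connect closed_lt).
by rewrite !inE lt_ik => /esym lt_jk; rewrite -leqNgt ltnW.
Qed.

End PathGraph.

Arguments path_graph : clear implicits.

Lemma path3_hyp : prop21_hyp (path_graph 3) 0.
Proof.
split=> //; [exact: path_graph_simple | exact: path_graph_connected |].
exists [set Ordinal (isT : 1 < 3)]; apply/andP; split.
  by apply/good_neighbor_faultyP.
by apply: (@path_graph_cut_vertex _ _ ord0 ord_max).
Qed.

Lemma path3_kappa : kappa (path_graph 3) = 1 /\ kappa_g (path_graph 3) 0 = 1.
Proof.
have := kappa_bounds path3_hyp; have := kappa_gt0 (@path_graph_connected 3).
by rewrite card_ord => /(_ isT); lia.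
Qed.

Theorem proposition2p1 :
  (forall (T : finType) (e : rel T) (g : nat),
      prop21_hyp e g ->
      kappa e <= kappa_g e g <= #|T| - 2 * g - 2)
  /\ (exists (T : finType) (e : rel T) (g : nat),
        prop21_hyp e g /\ kappa e = kappa_g e g)
  /\ (exists (T : finType) (e : rel T) (g : nat),
        prop21_hyp e g /\ kappa_g e g = #|T| - 2 * g - 2).
Proof.
have [kappa1 kappa_g1] := path3_kappa.
split; first exact: kappa_bounds.
split; exists _, (path_graph 3), 0; split; try exact: path3_hyp.
  by rewrite kappa1 kappa_g1.
by rewrite kappa_g1 card_ord.
Qed.
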